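(* The oriented chromatic number is unbounded on the asymmetrical digraphs of $\mathcal{LE}_2$: for every positive integer $m$ there is an asymmetrical digraph $D\in\mathcal{LE}_2$ with $\chi_o(D)\geq m$.
   Context: All digraphs are finite, without loops or multiple arcs. A digraph is asymmetrical if it has no pair of opposite arcs $(u,v),(v,u)$. For an asymmetrical digraph $D$, an oriented $k$-colouring is a proper colouring $V(D)\to\{1,\ldots,k\}$ (vertices joined by an arc get distinct colours) such that all arcs between any two colour classes have the same direction; the oriented chromatic number $\chi_o(D)$ is the least such $k$. Paths and cycles are directed; the length of a path or cycle is its number of arcs. A digraph is strong if for every ordered pair of vertices $x,y$ there is a directed path from $x$ to $y$. For a subdigraph $H$ of a digraph $D$, an ear of $H$ in $D$ is either a directed path in $D$ whose two end vertices lie in $H$ and whose internal vertices do not lie in $H$, or a directed cycle in $D$ having exactly one vertex in $H$. An ear decomposition of a strong digraph $D$ is a sequence $(D_0,D_1,\ldots,D_k)$ of strong subdigraphs of $D$ such that $D_0$ is a directed cycle, $D_{j+1}=D_j\cup P_j$ where $P_j$ is an ear of $D_j$ in $D$ for every $j\in\{0,\ldots,k-1\}$, and $D_k=D$. For an integer $i\geq 1$, $\mathcal{LE}_i$ denotes the family of strong digraphs having an ear decomposition in which every ear has length at least $i$. *)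

From mathcomp Require Import all_boot.
Set Implicit Arguments. Unset Strict Implicit. Unset Printing Implicit Defensive.

Section Digraphs.
Variable T : finType.
Variable E : rel T.

(* no loops (multiple arcs are impossible with a relation) *)
Definition loopless : Prop := forall x, ~~ E x x.

Definition asymmetrical : Prop := forall u v, E u v -> ~~ E v u.

Definition oriented_colouring (k : nat) (c : T -> 'I_k) : Prop :=
  (forall u v, E u v -> c u != c v) /\
  (forall u v x y, E u v -> E x y -> c u = c y -> c v = c x -> False).

Definition subdigraph := ({set T} * {set T * T})%type.

Definition full_digraph : subdigraph := ([set: T], [set a | E a.1 a.2]).

Definition union_sub (H1 H2 : subdigraph) : subdigraph :=
  (H1.1 :|: H2.1, H1.2 :|: H2.2).

Definition strong_sub (H : subdigraph) : bool :=
  [forall x in H.1, forall y in H.1, connect (fun u v => (u, v) \in H.2) x y].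

Definition dpath (s : seq T) : bool :=
  if s is x :: p then [&& p != [::], path E x p & uniq s] else false.

Definition dcycle (s : seq T) : bool :=
  [&& 1 < size s, cycle E s & uniq s].

(* an ear: (true, s) is the cycle s, (false, s) is the path s *)
Definition ear_arcs (e : bool * seq T) : seq (T * T) :=
  if e.1 then zip e.2 (rot 1 e.2) else zip e.2 (behead e.2).

Definition ear_sub (e : bool * seq T) : subdigraph :=
  ([set x in e.2], [set a in ear_arcs e]).

Definition ear_length (e : bool * seq T) : nat :=
  if e.1 then size e.2 else (size e.2).-1.

Definition is_ear (H : subdigraph) (e : bool * seq T) : bool :=
  if e.1 then dcycle e.2 && (#|[set x in e.2] :&: H.1| == 1)
  else if e.2 is x :: p then
    [&& dpath (x :: p), x \in H.1, last x p \in H.1 &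
        all (fun y => y \notin H.1) (behead (belast x p))]
  else false.

Fixpoint ear_decomp_from (i : nat) (H : subdigraph) (es : seq (bool * seq T)) : bool :=
  if es is e :: es' then
    [&& is_ear H e, i <= ear_length e, strong_sub (union_sub H (ear_sub e)) &
        ear_decomp_from i (union_sub H (ear_sub e)) es']
  else H == full_digraph.

Definition in_LE (i : nat) : Prop :=
  strong_sub full_digraph /\
  exists (c0 : seq T) (es : seq (bool * seq T)),
    [&& dcycle c0, strong_sub (ear_sub (true, c0)) & ear_decomp_from i (ear_sub (true, c0)) es].

End Digraphs.

(* Take a directed cycle on n+1 vertices and, for every ordered pair (a, b) of
   distinct cycle vertices, a new vertex w with arcs a -> w -> b.  The two ends of
   a directed 2-path get distinct colours in any oriented colouring, so the cycle
   vertices get pairwise distinct colours and at least n+1 colours are needed.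
   Starting from the cycle, the 2-paths a -> w -> b are ears of length 2; after
   adding any set of them we have the subdigraph induced by the cycle and the
   midpoints added so far, which is strong because each midpoint has an arc from
   and an arc to the cycle. *)

From mathcomp Require Import all_boot.
Set Implicit Arguments. Unset Strict Implicit. Unset Printing Implicit Defensive.

Lemma val_iter_ordS n (i : 'I_n) k : val (iter k (@ordS n) i) = (i + k) %% n.
Proof.
elim: k => [|k IHk]; first by rewrite addn0 modn_small.
by rewrite iterS /= IHk -addn1 modnDml -addnA addn1.
Qed.

Lemma iter_ordS_neq n (i : 'I_n) k : 0 < k < n -> iter k (@ordS n) i != i.
Proof.
case/andP=> k_gt0 k_lt_n; apply/eqP => /(congr1 val).
rewrite val_iter_ordS -[RHS](modn_small (ltn_ord i)) -[X in _ = X %% _]addn0.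
by move/eqP; rewrite eqn_modDl mod0n modn_small // (negbTE (lt0n_neq0 k_gt0)).
Qed.

Lemma fconnect_ordS n (a b : 'I_n.+1) : fconnect (@ordS n.+1) a b.
Proof.
have from0 c : fconnect (@ordS n.+1) ord0 c.
  have -> : c = iter c (@ordS n.+1) ord0.
    by apply: val_inj; rewrite val_iter_ordS add0n modn_small.
  exact: fconnect_iter.
by rewrite (connect_trans _ (from0 b)) // fconnect_sym ?from0 //; exact: ordS_inj.
Qed.

Lemma order_ordS n (a : 'I_n.+1) : order (@ordS n.+1) a = n.+1.
Proof. by rewrite /order (eq_card (fconnect_ordS a)) card_ord. Qed.

Lemma fpath_map_belast (T : eqType) (f : T -> T) x s :
  fpath f x s -> map f (belast x s) = s.
Proof. by elim: s x => //= y s IHs x /andP[/eqP <- /IHs ->]. Qed.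

Lemma fcycle_rot1 (T : eqType) (f : T -> T) s : fcycle f s -> rot 1 s = map f s.
Proof. by case: s => // x s /fpath_map_belast; rewrite rot1_cons belast_rcons. Qed.

Section DigraphFacts.
Variables (T : finType) (E : rel T).

Lemma oriented_colouring_2path k (c : T -> 'I_k) u v w :
  oriented_colouring E c -> E u v -> E v w -> c u != c w.
Proof. by case=> _ orient Euv Evw; apply/eqP => cuw; apply: (orient u v v w). Qed.

Definition induced (A : {set T}) : subdigraph T :=
  (A, [set a | [&& E a.1 a.2, a.1 \in A & a.2 \in A]]).

Lemma induced_setT : induced [set: T] = full_digraph E.
Proof. by congr pair; apply/setP => a; rewrite !inE !andbT. Qed.

Lemma strong_sub_root (H : subdigraph T) r :
  (forall x, x \in H.1 ->
     connect (fun u v => (u, v) \in H.2) x r /\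
     connect (fun u v => (u, v) \in H.2) r x) ->
  strong_sub H.
Proof.
move=> root_conn; apply/forallP => x; apply/implyP => /root_conn[xr _].
apply/forallP => y; apply/implyP => /root_conn[_ ry].
exact: connect_trans xr ry.
Qed.

End DigraphFacts.

Section CycleWithDetours.
Variable n : nat.

(* [inr (a, j)] is the midpoint of the 2-path from [a] to [lift a j], the j-th
   cycle vertex other than [a]. *)
Definition vertex := ('I_n.+1 + 'I_n.+1 * 'I_n)%type.

Definition arc : rel vertex := fun u v =>
  match u, v with
  | inl a, inl b => ordS a == b
  | inl a, inr q => q.1 == a
  | inr q, inl b => lift q.1 q.2 == b
  | inr _, inr _ => false
  end.

Lemma arc_loopless : 0 < n -> loopless arc.
Proof. by move=> n_gt0 [a|q] //=; apply: (@iter_ordS_neq _ _ 1). Qed.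

Lemma arc_asymmetrical : 1 < n -> asymmetrical arc.
Proof.
move=> n_gt1 [a|q] [b|q'] //= /eqP <-.
- exact: (@iter_ordS_neq _ _ 2).
- by rewrite eq_sym neq_lift.
- exact: neq_lift.
Qed.

Lemma arc_colours_ge k (c : vertex -> 'I_k) :
  oriented_colouring arc c -> n.+1 <= k.
Proof.
move=> oc; have c_inj : injective (c \o inl).
  move=> a b /=; apply: contra_eq => /unlift_some[j -> _].
  by apply: (oriented_colouring_2path (v := inr (a, j) : vertex) oc) => /=.
by have := leq_card _ c_inj; rewrite !card_ord.
Qed.

Definition base_cycle : seq vertex := map inl (orbit (@ordS n.+1) ord0).

Definition detour (q : 'I_n.+1 * 'I_n) : bool * seq vertex :=
  (false, [:: inl q.1; inr q; inl (lift q.1 q.2)]).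

Definition stage (S : {set 'I_n.+1 * 'I_n}) : subdigraph vertex :=
  induced arc [set v | if v is inr q then q \in S else true].

Lemma mem_base_cycle a : inl a \in base_cycle.
Proof. by rewrite (mem_map (@inl_inj _ _)) -fconnect_orbit fconnect_ordS. Qed.

Lemma base_cycle_arcs :
  zip base_cycle (rot 1 base_cycle)
  = [seq (inl a, inl (ordS a)) | a <- orbit (@ordS n.+1) ord0].
Proof.
by rewrite /base_cycle -map_rot (fcycle_rot1 (cycle_orbit (@ordS_inj _) _)) -map_comp zip_map.
Qed.

Lemma ear_sub_base_cycle : ear_sub (true, base_cycle) = stage set0.
Proof.
congr pair; apply/setP.
  by case=> [a|q]; rewrite !inE ?mem_base_cycle //; apply/mapP => -[].
case=> [[a|q] [b|q']]; rewrite !inE /ear_arcs base_cycle_arcs /=.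
- rewrite andbT; apply/mapP/eqP => [[c _ [-> ->]] // | <-].
  by exists a; rewrite // -fconnect_orbit fconnect_ordS.
all: by rewrite ?inE ?andbF; apply/mapP => -[? _ []].
Qed.

Lemma dcycle_base_cycle : 0 < n -> dcycle arc base_cycle.
Proof.
move=> n_gt0; rewrite /dcycle size_map size_orbit order_ordS ltnS n_gt0 cycle_map.
by rewrite (map_inj_uniq (@inl_inj _ _)) orbit_uniq cycle_orbit //; exact: ordS_inj.
Qed.

Lemma stage_detour S q : union_sub (stage S) (ear_sub (detour q)) = stage (q |: S).
Proof.
congr pair; apply/setP.
  by case=> [a|q1]; rewrite !inE -!sum_eqE //= orbF orbC.
case=> [[a|q1] [b|q2]];
  rewrite !inE /= ?xpair_eqE -?sum_eqE /= ?andbF ?andbT ?orbF //.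
- have [->|ne] := eqVneq q2 q; last by rewrite in_setU1 !(negbTE ne) andbF orbF.
  by rewrite ?eqxx setU11 !andbT [a == _]eq_sym andbK.
- have [->|ne] := eqVneq q1 q; last by rewrite in_setU1 !(negbTE ne) orbF.
  by rewrite ?eqxx setU11 !andbT [b == _]eq_sym andbK.
Qed.

Lemma is_ear_detour (S : {set 'I_n.+1 * 'I_n}) q :
  q \notin S -> is_ear arc (stage S) (detour q).
Proof. by move=> qS; rewrite /is_ear /= !inE qS !eqxx -sum_eqE /= neq_lift. Qed.

Lemma strong_stage S : strong_sub (stage S).
Proof.
pose r u v := (u, v) \in (stage S).2.
have cycle_r : cycle r base_cycle.
  rewrite cycle_map (@eq_cycle _ _ (frel (@ordS n.+1))) ?cycle_orbit //.
    exact: ordS_inj.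
  by move=> a b; rewrite /relpre /r /= !inE andbT.
have on_cycle a b : connect r (inl a) (inl b).
  exact: connect_cycle cycle_r _ _ (mem_base_cycle a) (mem_base_cycle b).
apply: (@strong_sub_root _ _ (inl ord0)) => -[a|q]; first by rewrite !on_cycle.
rewrite inE /= => qS; split.
  apply: connect_trans (on_cycle (lift q.1 q.2) ord0); apply: connect1.
  by rewrite /r /= !inE /= eqxx qS.
apply: connect_trans (on_cycle ord0 q.1) _; apply: connect1.
by rewrite /r /= !inE /= eqxx qS.
Qed.

Lemma stage_setT : stage [set: 'I_n.+1 * 'I_n] = full_digraph arc.
Proof.
rewrite /stage -induced_setT; congr induced.
by apply/setP => -[a|q]; rewrite !inE.
Qed.

Lemma ear_decomp_detours qs :
  uniq qs -> ear_decomp_from arc 2 (stage [set q | q \notin qs]) (map detour qs).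
Proof.
elim: qs => [_ | q qs IHqs] /=.
  by rewrite -stage_setT; apply/eqP; congr stage; apply/setP => q; rewrite !inE.
case/andP => q_qs uniq_qs.
have add_q : q |: [set x | x \notin q :: qs] = [set x | x \notin qs].
  apply/setP => x; rewrite !inE; have [->|] //= := eqVneq x q.
rewrite is_ear_detour; last by rewrite inE mem_head.
by rewrite /= stage_detour add_q strong_stage IHqs.
Qed.

Lemma arc_in_LE2 : 0 < n -> in_LE arc 2.
Proof.
move=> n_gt0; split; first by rewrite -stage_setT strong_stage.
exists base_cycle, (map detour (enum {: 'I_n.+1 * 'I_n})).
rewrite dcycle_base_cycle // ear_sub_base_cycle strong_stage /=.
have -> : set0 = [set q | q \notin enum {: 'I_n.+1 * 'I_n}].
  by apply/setP => q; rewrite !inE mem_enum.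
exact/ear_decomp_detours/enum_uniq.
Qed.

End CycleWithDetours.

Theorem mainTheorem19 :
  forall m : nat, 0 < m ->
  exists (T : finType) (E : rel T),
    [/\ loopless E, asymmetrical E, in_LE E 2 &
        forall (k : nat) (c : T -> 'I_k), oriented_colouring E c -> m <= k].
Proof.
move=> m m_gt0; exists (vertex m.+1), (@arc m.+1); split.
- exact: arc_loopless.
- exact: arc_asymmetrical.
- exact: arc_in_LE2.
- by move=> k c /arc_colours_ge /ltnW /ltnW.
Qed.
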